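(* Fix $N\ge1$ and $\lambda\in\mathrm{Sign}_N$. Take $q=\mathfrak t\in(0,1)$, $s_x=0$ and $\xi_x=1$ for all $x\ge1$, and keep $s_0,\xi_0$ free; then $\xi_0^{-\ell(\lambda)}\mathsf F_\lambda(u_1,\dots,u_N)$ and $\xi_0^{\ell(\lambda)}\mathsf F^*_\lambda(v_1,\dots,v_N)$ are rational functions of $a=s_0\xi_0$ and $b=s_0/\xi_0$ (and of the variables). In the limit $a\to0$, $b\to\mathfrak t^{1-N}$, $$\xi_0^{-\ell(\lambda)}\mathsf F_\lambda(u_1,\dots,u_N)\to\prod_{r\ge0}(\mathfrak t;\mathfrak t)_{m_r(\lambda)}\cdot F^{HL}_\lambda(u_1,\dots,u_N;\mathfrak t),$$ $$\xi_0^{\ell(\lambda)}\mathsf F^*_\lambda(v_1,\dots,v_N)\to\prod_{j=1}^N\frac{1}{1-v_j\mathfrak t^{1-N}}\prod_{r\ge1}\frac{1}{(\mathfrak t;\mathfrak t)_{m_r(\lambda)}}\cdot Q^{HL}_\lambda(v_1,\dots,v_N;\mathfrak t).$$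
   Context: Signatures: $\mathrm{Sign}_N$ is the set of integer sequences $\lambda=(\lambda_1\ge\dots\ge\lambda_N\ge0)$; $m_r(\lambda)=\#\{i:\lambda_i=r\}$, $\ell(\lambda)=N-m_0(\lambda)$; $(a;q)_k=\prod_{i=0}^{k-1}(1-aq^i)$. Spin Hall--Littlewood functions (parameters $q$, $s_x,\xi_x$, $x\ge0$): with $\varphi_k(u)=\frac{1-q}{1-s_k\xi_ku}\prod_{j=0}^{k-1}\frac{\xi_ju-s_j}{1-s_j\xi_ju}$ and $\hat\varphi_k$ equal to $\varphi_k$ with every $\xi_x$ replaced by $\xi_x^{-1}$, $\mathsf F_\lambda(u_1,\dots,u_N)=\sum_{\sigma\in S_N}\sigma\Big(\prod_{i<j}\frac{u_i-qu_j}{u_i-u_j}\prod_{i=1}^N\varphi_{\lambda_i}(u_i)\Big)$ and $\mathsf F^*_\lambda(v_1,\dots,v_N)=\prod_{r\ge0}\frac{(s_r^2;q)_{m_r(\lambda)}}{(q;q)_{m_r(\lambda)}}\sum_{\sigma\in S_N}\sigma\Big(\prod_{i<j}\frac{v_i-qv_j}{v_i-v_j}\prod_{i=1}^N\hat\varphi_{\lambda_i}(v_i)\Big)$, where $\sigma$ permutes the variables only. Interpolation Hall--Littlewood polynomial: $F^{HL}_\lambda(u_1,\dots,u_N;\mathfrak t)=(1-\mathfrak t)^N\prod_{r\ge0}\frac{1}{(\mathfrak t;\mathfrak t)_{m_r(\lambda)}}\sum_{\sigma\in S_N}\sigma\Big(\prod_{i<j}\frac{u_i-\mathfrak tu_j}{u_i-u_j}\prod_{i=1}^{\ell(\lambda)}u_i^{\lambda_i}(1-\mathfrak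 t^{1-N}u_i^{-1})\Big)$. Hall--Littlewood polynomial: $Q^{HL}_\lambda(v_1,\dots,v_N;\mathfrak t)=\frac{(1-\mathfrak t)^N}{(\mathfrak t;\mathfrak t)_{N-\ell(\lambda)}}\sum_{\sigma\in S_N}\sigma\Big(\prod_{i<j}\frac{v_i-\mathfrak tv_j}{v_i-v_j}\prod_{i=1}^N v_i^{\lambda_i}\Big)$. *)

From HB Require Import structures.
From mathcomp Require Import all_boot all_order all_algebra all_fingroup.
Set Implicit Arguments. Unset Strict Implicit. Unset Printing Implicit Defensive.
Import Order.TTheory GRing.Theory Num.Theory.
Local Open Scope ring_scope.

Definition qpoch (R : ringType) (a q : R) (k : nat) : R :=
  \prod_(i < k) (1 - a * q ^+ i).

Definition is_signature (N : nat) (lam : 'I_N -> nat) : Prop :=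
  forall i j : 'I_N, (i <= j)%N -> (lam j <= lam i)%N.

Definition mult (N : nat) (lam : 'I_N -> nat) (r : nat) : nat :=
  #|[set i | lam i == r]|.

Definition ell (N : nat) (lam : 'I_N -> nat) : nat := (N - mult lam 0)%N.

(* every r >= sigbound lam has m_r(lambda) = 0, so products over r >= 0
   reduce to products over r < sigbound lam *)
Definition sigbound (N : nat) (lam : 'I_N -> nat) : nat :=
  (\max_(i < N) lam i).+1.

Section Defs.
Variable R : fieldType.

Definition phi (s xi : nat -> R) (q : R) (k : nat) (u : R) : R :=
  (1 - q) / (1 - s k * xi k * u) *
  \prod_(j < k) ((xi j * u - s j) / (1 - s j * xi j * u)).

Definition phihat (s xi : nat -> R) (q : R) (k : nat) (u : R) : R :=
  phi s (fun x => (xi x)^-1) q k u.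

Definition symprod (N : nat) (q : R) (u : 'I_N -> R) : R :=
  \prod_(i < N) \prod_(j < N | (i < j)%N) ((u i - q * u j) / (u i - u j)).

Definition spinF (N : nat) (s xi : nat -> R) (q : R) (lam : 'I_N -> nat)
    (u : 'I_N -> R) : R :=
  \sum_(sg : 'S_N)
     (symprod q (fun i => u (sg i)) *
      \prod_(i < N) phi s xi q (lam i) (u (sg i))).

Definition spinFstar (N : nat) (s xi : nat -> R) (q : R) (lam : 'I_N -> nat)
    (v : 'I_N -> R) : R :=
  (\prod_(r < sigbound lam)
      (qpoch (s r ^+ 2) q (mult lam r) / qpoch q q (mult lam r))) *
  \sum_(sg : 'S_N)
     (symprod q (fun i => v (sg i)) *
      \prod_(i < N) phihat s xi q (lam i) (v (sg i))).

Definition FHL (N : nat) (lam : 'I_N -> nat) (t : R) (u : 'I_N -> R) : R :=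
  (1 - t) ^+ N * (\prod_(r < sigbound lam) (qpoch t t (mult lam r))^-1) *
  \sum_(sg : 'S_N)
     (symprod t (fun i => u (sg i)) *
      \prod_(i < N | (i < ell lam)%N)
         (u (sg i) ^+ lam i * (1 - t ^- N.-1 * (u (sg i))^-1))).

Definition QHL (N : nat) (lam : 'I_N -> nat) (t : R) (v : 'I_N -> R) : R :=
  (1 - t) ^+ N / qpoch t t (N - ell lam) *
  \sum_(sg : 'S_N)
     (symprod t (fun i => v (sg i)) * \prod_(i < N) v (sg i) ^+ lam i).

Definition spec_s (s0 : R) (x : nat) : R := if x == 0%N then s0 else 0.
Definition spec_xi (xi0 : R) (x : nat) : R := if x == 0%N then xi0 else 1.

End Defs.

From HB Require Import structures.
From mathcomp Require Import all_boot all_order all_algebra all_fingroup.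
From mathcomp Require Import ring zify.
From mathcomp Require Import all_classical all_reals all_analysis.
Import Order.TTheory GRing.Theory Num.Theory.
Import numFieldNormedType.Exports.
Set Implicit Arguments. Unset Strict Implicit.
Local Open Scope ring_scope.

(* Under the specialization s_x = 0, xi_x = 1 (x >= 1), the one-variable
   weight phi_k(u) factors as xi_0^[k > 0] * phi_ab t a b k u, where phi_ab
   is an explicit rational function of u and of a = s_0 xi_0, b = s_0 / xi_0
   only; the hatted weight is the same with xi_0^-1 in place of xi_0, i.e.
   with a and b exchanged.  Since a signature has exactly ell(lambda) nonzero
   parts, the normalized functions xi_0^-ell F and xi_0^ell F* become the
   symmetrization [Fab] of phi_ab (times a prefactor polynomial in
   s_0^2 = a b in the dual case), which is the first claim.  Evaluating
   phi_ab at (a, b) = (0, t^(1-N)), resp. at the exchanged point, produces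
   exactly the summands of F^HL, resp. of Q^HL, which gives the limiting
   values; and [Fab] is continuous in (a, b) wherever its denominators
   1 - a u_i do not vanish, which turns these values into the stated
   epsilon-delta limits. *)

Lemma card_tail (N k : nat) : #|[set j : 'I_N | (k <= j)%N]| = (N - k)%N.
Proof.
rewrite -sum1_card; transitivity (\sum_(k <= i < N) 1)%N.
  by rewrite big_geq_mkord; apply: eq_bigl => i; rewrite inE.
by rewrite sum_nat_const_nat muln1.
Qed.

Lemma mult_le (N : nat) (lam : 'I_N -> nat) (r : nat) : (mult lam r <= N)%N.
Proof. by rewrite /mult -[X in (_ <= X)%N]card_ord max_card. Qed.

Lemma mult0E (N : nat) (lam : 'I_N -> nat) : mult lam 0 = (N - ell lam)%N.
Proof. by rewrite /ell subKn // mult_le. Qed.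

Lemma sig_zeroE (N : nat) (lam : 'I_N -> nat) : is_signature lam ->
  forall i, (lam i == 0%N) = (ell lam <= i)%N.
Proof.
move=> sig_lam i; rewrite /ell; have := mult_le lam 0.
have [lam_i0|lam_i_neq0] := eqVneq (lam i) 0%N.
  have: (#|[set j : 'I_N | (i <= j)%N]| <= mult lam 0)%N.
    apply: subset_leq_card; apply/fintype.subsetP => j; rewrite !inE => le_ij.
    by have := sig_lam _ _ le_ij; rewrite lam_i0 leqn0.
  by rewrite card_tail; lia.
have: (mult lam 0 <= #|[set j : 'I_N | (i.+1 <= j)%N]|)%N.
  apply: subset_leq_card; apply/fintype.subsetP => j; rewrite !inE => lam_j0.
  rewrite ltnNge; apply/negP => le_ji; have := sig_lam _ _ le_ji.
  by rewrite (eqP lam_j0) leqn0 (negbTE lam_i_neq0).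
by rewrite card_tail; have := ltn_ord i; lia.
Qed.

(* Exactly ell = N - m_0 parts of lam are nonzero, so a factor x attached to
   every nonzero part contributes x ^+ ell. *)
Lemma prod_nonzero_parts (R : pzRingType) (N : nat) (lam : 'I_N -> nat)
    (x : R) :
  \prod_(i < N) (if lam i == 0%N then 1 else x) = x ^+ ell lam.
Proof.
rewrite (eq_bigr (fun i => if lam i != 0%N then x else 1)); last first.
  by move=> i _; case: (lam i == 0%N).
rewrite -big_mkcond prodr_const; congr (_ ^+ _).
have : (mult lam 0 + #|(fun i : 'I_N => lam i != 0%N)|)%N = N.
  rewrite -[RHS](card_ord N) -(cardsC [set i : 'I_N | lam i == 0%N]).
  by congr (_ + _); apply: eq_card => i; rewrite !inE.
move=> card_split; apply/eqP; rewrite /ell -(eqn_add2l (mult lam 0)) card_split.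
by rewrite subnKC ?mult_le.
Qed.

Section ReducedWeights.
Variable R : fieldType.

(* phi_k(u) with s_x = 0, xi_x = 1 for x >= 1, up to the factor xi_0^[k>0]. *)
Definition phi_ab (t a b : R) (k : nat) (u : R) : R :=
  if k is k'.+1 then (1 - t) * u ^+ k' * (u - b) / (1 - a * u)
  else (1 - t) / (1 - a * u).

Lemma phi_spec (s0 xi0 t u : R) (k : nat) : xi0 != 0 ->
  phi (spec_s s0) (spec_xi xi0) t k u =
  (if k == 0%N then 1 else xi0) * phi_ab t (s0 * xi0) (s0 / xi0) k u.
Proof.
move=> xi0_neq0; case: k => [|k]; rewrite /phi /phi_ab /=.
  by rewrite big_ord0 mulr1 mul1r.
rewrite big_ord_recl (eq_bigr (fun _ => u)); last first.
  by move=> j _; rewrite /spec_s /spec_xi /= !(mul0r, mul1r, subr0, divr1).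
rewrite prodr_const card_ord /spec_s /spec_xi /= !(mul0r, subr0, divr1).
have -> : xi0 * u - s0 = xi0 * (u - s0 / xi0).
  by rewrite mulrBr mulrCA divff // mulr1.
ring.
Qed.

(* Inverting xi_0 exchanges a and b, so phihat is phi_ab at (b, a). *)
Lemma phihat_spec (s0 xi0 t u : R) (k : nat) : xi0 != 0 ->
  phihat (spec_s s0) (spec_xi xi0) t k u =
  (if k == 0%N then 1 else xi0^-1) * phi_ab t (s0 / xi0) (s0 * xi0) k u.
Proof.
move=> xi0_neq0; rewrite /phihat.
have -> : (fun x => (spec_xi xi0 x)^-1) = spec_xi xi0^-1.
  by apply/funext => x; rewrite /spec_xi; case: ifP; rewrite ?invr1.
by rewrite phi_spec ?invr_eq0 // invrK.
Qed.

Variables (N : nat) (lam : 'I_N -> nat) (t : R).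

Definition Fab (a b : R) (u : 'I_N -> R) : R :=
  \sum_(sg : 'S_N) (symprod t (fun i => u (sg i)) *
     \prod_(i < N) phi_ab t a b (lam i) (u (sg i))).

(* The prefactor of F* as a function of s_0^2 = a b. *)
Definition dual_pref (p : R) : R :=
  \prod_(r < sigbound lam)
     (qpoch (if (r : nat) == 0%N then p else 0) t (mult lam r) /
      qpoch t t (mult lam r)).

(* First claim for F: the xi_0-factors of the nonzero parts cancel the
   normalization, leaving a function of (a, b) alone. *)
Lemma F_eq (s0 xi0 : R) (u : 'I_N -> R) : xi0 != 0 ->
  xi0 ^- ell lam * spinF (spec_s s0) (spec_xi xi0) t lam u =
  Fab (s0 * xi0) (s0 / xi0) u.
Proof.
move=> xi0_neq0; rewrite /spinF /Fab mulr_sumr; apply: eq_bigr => sg _.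
under eq_bigr do rewrite phi_spec //.
by rewrite big_split /= prod_nonzero_parts mulrCA mulKf ?expf_neq0.
Qed.

(* First claim for F*: the same cancellation, with (a, b) exchanged and the
   prefactor (s_0^2; t)_{m_0} / (t; t)_{m_0} expressed through s_0^2 = a b. *)
Lemma Fstar_eq (s0 xi0 : R) (v : 'I_N -> R) : xi0 != 0 ->
  xi0 ^+ ell lam * spinFstar (spec_s s0) (spec_xi xi0) t lam v =
  dual_pref (s0 * xi0 * (s0 / xi0)) * Fab (s0 / xi0) (s0 * xi0) v.
Proof.
move=> xi0_neq0; rewrite /spinFstar /Fab /dual_pref mulrCA; congr (_ * _).
  apply: eq_bigr => r _; congr (qpoch _ _ _ / _); rewrite /spec_s.
  case: (nat_of_ord r) => [|r'] /=; last by rewrite expr0n.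
  by rewrite mulrACA divff // mulr1.
rewrite mulr_sumr; apply: eq_bigr => sg _.
under eq_bigr do rewrite phihat_spec //.
by rewrite big_split /= prod_nonzero_parts mulrCA exprVn mulVKf ?expf_neq0.
Qed.
End ReducedWeights.

Section LimitValues.
Variable R : numFieldType.
Variables (N : nat) (lam : 'I_N -> nat) (t : R).
Hypotheses (t_gt0 : 0 < t) (t_lt1 : t < 1).

Lemma qpoch_neq0 (m : nat) : qpoch t t m != 0.
Proof.
apply/prodf_neq0 => i _; rewrite -exprS subr_eq0 eq_sym lt_eqF //.
by rewrite exprn_ilt1 ?ltW.
Qed.

Lemma qpoch0 (m : nat) : qpoch (0 : R) t m = 1.
Proof. by rewrite /qpoch big1 // => i _; rewrite mul0r subr0. Qed.

Lemma Fab_limit (u : 'I_N -> R) : is_signature lam -> (forall i, u i != 0) ->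
  Fab lam t 0 (t ^- N.-1) u =
  (\prod_(r < sigbound lam) qpoch t t (mult lam r)) * FHL lam t u.
Proof.
move=> sig_lam u_neq0; rewrite /FHL.
set X := \prod_(r < sigbound lam) qpoch t t (mult lam r).
have X_neq0 : X != 0 by apply/prodf_neq0 => r _; exact: qpoch_neq0.
rewrite prodfV -/X (mulrC ((1 - t) ^+ N)) !mulrA mulfV // mul1r.
rewrite /Fab mulr_sumr; apply: eq_bigr => sg _; rewrite mulrCA; congr (_ * _).
have -> : (1 - t) ^+ N = \prod_(i < N) (1 - t) by rewrite prodr_const card_ord.
rewrite (big_mkcond (fun i : 'I_N => (i < ell lam)%N)) -big_split /=.
apply: eq_bigr => i _; rewrite ltnNge -sig_zeroE //.
have := u_neq0 (sg i); move: (u (sg i)) => w w_neq0.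
rewrite /phi_ab; case: (lam i) => [|k] /=; rewrite mul0r subr0 divr1 ?mulr1 //.
have -> : w - t ^- N.-1 = w * (1 - t ^- N.-1 * w^-1).
  by rewrite mulrBr mulr1 mulrCA mulfV ?mulr1.
by rewrite exprS; ring.
Qed.

Lemma Fab_b0 (a : R) (v : 'I_N -> R) :
  Fab lam t a 0 v = (1 - t) ^+ N * (\prod_(j < N) (1 - a * v j)^-1) *
    \sum_(sg : 'S_N)
      (symprod t (fun i => v (sg i)) * \prod_(i < N) v (sg i) ^+ lam i).
Proof.
rewrite /Fab mulr_sumr; apply: eq_bigr => sg _.
have -> : \prod_(i < N) phi_ab t a 0 (lam i) (v (sg i)) =
    \prod_(i < N) ((1 - t) * v (sg i) ^+ lam i * (1 - a * v (sg i))^-1).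
  apply: eq_bigr => i _; rewrite /phi_ab; case: (lam i) => [|k] /=.
    by rewrite expr0 mulr1.
  by rewrite subr0 exprSr mulrA.
rewrite !big_split /= prodr_const card_ord.
rewrite [\prod_(j < N) (1 - a * v j)^-1](reindex_inj (@perm_inj _ sg)) /=; ring.
Qed.

(* The dual limiting value: (t; t)_{m_0} is absorbed into Q^HL, the other
   (t; t)_{m_r} remain as the stated product over r >= 1. *)
Lemma Fab_dual_limit (v : 'I_N -> R) :
  dual_pref lam t 0 * Fab lam t (t ^- N.-1) 0 v =
  (\prod_(j < N) (1 - v j * t ^- N.-1)^-1) *
  (\prod_(1 <= r < sigbound lam) (qpoch t t (mult lam r))^-1) *
  QHL lam t v.
Proof.
have -> : dual_pref lam t 0 =
    \prod_(0 <= r < sigbound lam) (qpoch t t (mult lam r))^-1.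
  rewrite big_mkord; apply: eq_bigr => r _.
  by case: (nat_of_ord r == 0%N); rewrite qpoch0 div1r.
rewrite big_ltn // Fab_b0 /QHL -mult0E.
under [X in _ = X * _ * _]eq_bigr do rewrite mulrC.
ring.
Qed.
End LimitValues.

Section Continuity.
Local Open Scope classical_set_scope.
Variable R : numFieldType.
Context {T : Type} {F : set_system T} {FF : Filter F}.

Lemma sum_cvg (I : Type) (r : seq I) (P : pred I) (f : I -> T -> R)
    (l : I -> R) :
  (forall i, P i -> f i x @[x --> F] --> l i) ->
  \sum_(i <- r | P i) f i x @[x --> F] --> \sum_(i <- r | P i) l i.
Proof. by apply: cvg_big; exact: add_continuous. Qed.

Lemma prod_cvg (I : Type) (r : seq I) (P : pred I) (f : I -> T -> R)
    (l : I -> R) :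
  (forall i, P i -> f i x @[x --> F] --> l i) ->
  \prod_(i <- r | P i) f i x @[x --> F] --> \prod_(i <- r | P i) l i.
Proof. by apply: cvg_big; exact: mul_continuous. Qed.

Variables (fa fb : T -> R) (a0 b0 : R).
Hypotheses (fa_cvg : fa x @[x --> F] --> a0) (fb_cvg : fb x @[x --> F] --> b0).

Lemma phi_ab_cvg (t u : R) (k : nat) : 1 - a0 * u != 0 ->
  phi_ab t (fa x) (fb x) k u @[x --> F] --> phi_ab t a0 b0 k u.
Proof.
move=> den_neq0.
have den_cvg : (1 - fa x * u)^-1 @[x --> F] --> (1 - a0 * u)^-1.
  apply: cvgV => //; apply: cvgB; first exact: cvg_cst.
  by apply: cvgM => //; exact: cvg_cst.
case: k => [|k] /=; first by apply: cvgM => //; exact: cvg_cst.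
apply: cvgM => //; apply: cvgM; first exact: cvg_cst.
by apply: cvgB => //; exact: cvg_cst.
Qed.

Lemma Fab_cvg (N : nat) (lam : 'I_N -> nat) (t : R) (u : 'I_N -> R) :
  (forall i, 1 - a0 * u i != 0) ->
  Fab lam t (fa x) (fb x) u @[x --> F] --> Fab lam t a0 b0 u.
Proof.
move=> den_neq0; apply: sum_cvg => sg _; apply: cvgM; first exact: cvg_cst.
by apply: prod_cvg => i _; exact: phi_ab_cvg.
Qed.

(* The F* prefactor is a polynomial in a b, hence continuous. *)
Lemma dual_pref_cvg (N : nat) (lam : 'I_N -> nat) (t : R) :
  dual_pref lam t (fa x * fb x) @[x --> F] --> dual_pref lam t (a0 * b0).
Proof.
apply: prod_cvg => r _; apply: cvgM; last exact: cvg_cst.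
case: (nat_of_ord r == 0%N); last exact: cvg_cst.
apply: prod_cvg => i _; apply: cvgB; first exact: cvg_cst.
by apply: cvgM; [exact: cvgM | exact: cvg_cst].
Qed.
End Continuity.

Lemma coord_cvg (R : numFieldType) (a b : R) :
  (x.1 @[x --> (a, b)] --> a)%classic /\ (x.2 @[x --> (a, b)] --> b)%classic.
Proof. by split; [exact: cvg_fst | exact: cvg_snd]. Qed.

Lemma cvg_box (R : numFieldType) (h : R * R -> R) (p : R * R) (l : R) :
  (h @ nbhs p --> l)%classic -> forall e : R, 0 < e -> exists2 d : R, 0 < d &
  forall a b, `|a - p.1| < d -> `|b - p.2| < d -> `|h (a, b) - l| < e.
Proof.
move=> /cvgrPdistC_lt h_cvg e e_gt0.
have /nbhs_ballP [d d_gt0 near_p] := h_cvg e e_gt0.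
by exists d => // a b ha hb; apply: near_p; split; rewrite /ball /= distrC.
Qed.

Theorem mainTheorem7 (R : numFieldType) (N : nat) (lam : 'I_N -> nat) (t : R) :
  (0 < N)%N -> is_signature lam -> 0 < t -> t < 1 ->
  (* both normalized functions depend on (s_0, xi_0) only through
     a = s_0 xi_0 and b = s_0 / xi_0 *)
  (forall s0 xi0 s0' xi0' : R, xi0 != 0 -> xi0' != 0 ->
     s0 * xi0 = s0' * xi0' -> s0 / xi0 = s0' / xi0' ->
     (forall u : 'I_N -> R,
        xi0 ^- ell lam * spinF (spec_s s0) (spec_xi xi0) t lam u =
        xi0' ^- ell lam * spinF (spec_s s0') (spec_xi xi0') t lam u) /\
     (forall v : 'I_N -> R,
        xi0 ^+ ell lam * spinFstar (spec_s s0) (spec_xi xi0) t lam v =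
        xi0' ^+ ell lam * spinFstar (spec_s s0') (spec_xi xi0') t lam v)) /\
  (* limit a -> 0, b -> t^(1-N) for F *)
  (forall u : 'I_N -> R, injective u -> (forall i, u i != 0) ->
     forall eps : R, 0 < eps -> exists2 delta : R, 0 < delta &
       forall s0 xi0 : R, xi0 != 0 ->
         `|s0 * xi0| < delta -> `|s0 / xi0 - t ^- N.-1| < delta ->
         `|xi0 ^- ell lam * spinF (spec_s s0) (spec_xi xi0) t lam u
           - (\prod_(r < sigbound lam) qpoch t t (mult lam r)) * FHL lam t u|
         < eps) /\
  (* limit a -> 0, b -> t^(1-N) for F^* *)
  (forall v : 'I_N -> R, injective v -> (forall j, 1 - v j * t ^- N.-1 != 0) ->
     forall eps : R, 0 < eps -> exists2 delta : R, 0 < delta &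
       forall s0 xi0 : R, xi0 != 0 ->
         `|s0 * xi0| < delta -> `|s0 / xi0 - t ^- N.-1| < delta ->
         `|xi0 ^+ ell lam * spinFstar (spec_s s0) (spec_xi xi0) t lam v
           - (\prod_(j < N) (1 - v j * t ^- N.-1)^-1) *
             (\prod_(1 <= r < sigbound lam) (qpoch t t (mult lam r))^-1) *
             QHL lam t v|
         < eps).
Proof.
move=> _ sig_lam t_gt0 t_lt1; set c := t ^- N.-1; split.
  move=> s0 xi0 s0' xi0' xi0_neq0 xi0'_neq0 eq_a eq_b.
  by split=> w; rewrite ?F_eq ?Fstar_eq // eq_a eq_b.
split=> [u _ u_neq0 e e_gt0 | v _ den_neq0 e e_gt0].
- (* F: continuity of Fab at (a, b) = (0, c) *)
  have den_neq0 (i : 'I_N) : 1 - 0 * u i != 0 by rewrite mul0r subr0 oner_neq0.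
  have [a_cvg b_cvg] := coord_cvg 0 c.
  have [d d_gt0 near_lim] :=
    cvg_box (Fab_cvg (lam := lam) (t := t) a_cvg b_cvg den_neq0) e_gt0.
  exists d => // s0 xi0 xi0_neq0 near_a near_b.
  by rewrite F_eq // -Fab_limit //; apply: near_lim; rewrite /= ?subr0.
- (* F*: continuity of dual_pref (a b) * Fab (b, a) at (b, a) = (c, 0) *)
  have dual_den_neq0 (j : 'I_N) : 1 - c * v j != 0 by rewrite mulrC.
  have [b_cvg a_cvg] := coord_cvg c 0.
  have [d d_gt0 near_lim] := cvg_box (cvgM
    (dual_pref_cvg (lam := lam) (t := t) a_cvg b_cvg)
    (Fab_cvg (lam := lam) (t := t) b_cvg a_cvg dual_den_neq0)) e_gt0.
  exists d => // s0 xi0 xi0_neq0 near_a near_b.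
  rewrite Fstar_eq // -Fab_dual_limit -[dual_pref lam t 0](congr1 _ (mul0r c)).
  by apply: near_lim; rewrite /= ?subr0.
Qed.
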